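(* There exist a non-elementary hyperbolic group $G$, a finite generating set $S$ of $G$ (with $S=S^{-1}$, $e\notin S$), and a sequence of elements $(w_i)_{i\ge 1}$ of $G$ such that $\kappa(w_i)>0$ for all $i$, curvature computed with respect to $S$.
   Context: For a group $G$ with finite generating set $S$ ($S=S^{-1}$, $e\notin S$), $|x|$ denotes the word length of $x\in G$ with respect to $S$. For $g\in G$ define $\mathrm{Av}(g)=\frac{1}{|S|}\sum_{a\in S}|a^{-1}ga|$, and for $g\neq e$ define the curvature $\kappa(g)=\frac{|g|-\mathrm{Av}(g)}{|g|}$. *)

From Stdlib Require Import Reals List ClassicalEpsilon.
Import ListNotations.
Open Scope R_scope.

Record Grp := {
  car :> Type;
  gmul : car -> car -> car;
  gone : car;
  ginv : car -> car;
  gmulA : forall x y z, gmul x (gmul y z) = gmul (gmul x y) z;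
  gmul1l : forall x, gmul gone x = x;
  gmul1r : forall x, gmul x gone = x;
  gmulVl : forall x, gmul (ginv x) x = gone;
  gmulVr : forall x, gmul x (ginv x) = gone
}.

Arguments gmul {g}. Arguments gone {g}. Arguments ginv {g}.

Section G.
Variable G : Grp.

Definition gen_set (S : list G) : Prop :=
  NoDup S /\ ~ In gone S /\ (forall a, In a S -> In (ginv a) S) /\
  forall x : G, exists l : list G, Forall (fun a => In a S) l /\
                              fold_right gmul gone l = x.

Definition reps (S : list G) (n : nat) (x : G) : Prop :=
  exists l : list G, length l = n /\ Forall (fun a => In a S) l /\
                     fold_right gmul gone l = x.

Definition wl (S : list G) (x : G) : nat :=
  epsilon (inhabits 0%nat)
    (fun n => reps S n x /\ forall m, reps S m x -> (n <= m)%nat).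

Definition wlR (S : list G) (x : G) : R := INR (wl S x).

Definition Av (S : list G) (g : G) : R :=
  fold_right Rplus 0 (map (fun a => wlR S (gmul (ginv a) (gmul g a))) S)
  / INR (length S).

Definition kappa (S : list G) (g : G) : R := (wlR S g - Av S g) / wlR S g.

Definition wdist (S : list G) (x y : G) : R := wlR S (gmul (ginv x) y).

Definition gromov (S : list G) (x y w : G) : R :=
  (wdist S x w + wdist S y w - wdist S x y) / 2.

Definition hyperbolic (S : list G) : Prop :=
  exists delta : R, 0 <= delta /\
    forall x y z w : G,
      gromov S x z w >= Rmin (gromov S x y w) (gromov S y z w) - delta.

Definition subgroup (H : G -> Prop) : Prop :=
  H gone /\ (forall x y, H x -> H y -> H (gmul x y)) /\ (forall x, H x -> H (ginv x)).

Fixpoint npow (c : G) (n : nat) : G :=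
  match n with O => gone | S n' => gmul c (npow c n') end.

Definition zpow (c : G) (z : Z) : G :=
  match z with
  | Z0 => gone
  | Zpos p => npow c (Pos.to_nat p)
  | Zneg p => ginv (npow c (Pos.to_nat p))
  end.

Definition cyclic_sub (H : G -> Prop) : Prop :=
  exists c, H c /\ forall h, H h -> exists z : Z, h = zpow c z.

Definition finite_index (H : G -> Prop) : Prop :=
  exists T : list G, forall g : G, exists t h, In t T /\ H h /\ g = gmul t h.

(* elementary = virtually cyclic (includes finite groups) *)
Definition virtually_cyclic : Prop :=
  exists H : G -> Prop, subgroup H /\ finite_index H /\ cyclic_sub H.

Definition non_elementary : Prop := ~ virtually_cyclic.

End G.

(* Take G = W x D3, where W = Z/2 * Z/2 * Z/2 is the universal Coxeter group on
   letters a, b, c and D3 is the dihedral group of order 6 generated by two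
   reflections x, y, and S = {a, b, c, x, y}.  The Cayley graph of W is a tree, so
   the Gromov product in G differs by at most 3 from the length of the common
   prefix of reduced words, which is an ultrametric: G is hyperbolic.  No positive
   powers of ab and ac commute, so G is not virtually cyclic.  For
   w_n = (ab)^(n+1) a . xyx we have |w_n| = 2n + 6; conjugating by a, x or y
   shortens w_n by 2 while conjugating by b or c lengthens it by at most 2, hence
   Av(w_n) <= 2n + 28/5 < |w_n|. *)

From Stdlib Require Import Reals List Lia Lra Eqdep_dec Bool Classical ClassicalEpsilon.
Import ListNotations.
Open Scope R_scope.

Lemma pigeonhole_nat {T : Type} (l : list T) (f : nat -> T) :
  (forall n, In (f n) l) -> exists i j, (i < j)%nat /\ f i = f j.
Proof.
  intros Hl. apply NNPP. intros Hinj.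
  assert (Hnd : NoDup (map f (seq 0 (S (length l))))).
  { apply NoDup_map_NoDup_ForallPairs; [|apply seq_NoDup].
    intros i j _ _ E. destruct (Nat.lt_total i j) as [Hij|[Hij|Hij]]; auto;
      exfalso; apply Hinj; eauto. }
  apply NoDup_incl_length with (l' := l) in Hnd.
  - rewrite length_map, length_seq in Hnd. lia.
  - intros a Ha. apply in_map_iff in Ha. destruct Ha as [n [<- _]]. auto.
Qed.

Section GroupFacts.
Variable G : Grp.

Lemma ginv_unique (a b : G) : gmul a b = gone -> b = ginv a.
Proof.
  intros H. rewrite <- (gmul1l G b), <- (gmulVl G a), <- gmulA, H, gmul1r. reflexivity.
Qed.

Lemma ginv_mul (a b : G) : ginv (gmul a b) = gmul (ginv b) (ginv a).
Proof.
  symmetry; apply ginv_unique.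
  rewrite gmulA, <- (gmulA G a b), gmulVr, gmul1r, gmulVr. reflexivity.
Qed.

Lemma ginvK (a : G) : ginv (ginv a) = a.
Proof. symmetry; apply ginv_unique, gmulVl. Qed.

Lemma gmul_cancel_l (a x y : G) : gmul a x = gmul a y -> x = y.
Proof.
  intros H. rewrite <- (gmul1l G x), <- (gmul1l G y), <- (gmulVl G a), <- !gmulA, H.
  reflexivity.
Qed.

Lemma fold_right_gmul_app (l m : list G) :
  fold_right gmul gone (l ++ m) = gmul (fold_right gmul gone l) (fold_right gmul gone m).
Proof.
  induction l as [|a l IH]; simpl; [now rewrite gmul1l | now rewrite IH, gmulA].
Qed.

Lemma npow_add (c : G) m n : npow G c (m + n) = gmul (npow G c m) (npow G c n).
Proof.
  induction m as [|m IH]; simpl; [now rewrite gmul1l | now rewrite IH, gmulA].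
Qed.

Lemma commute_inv_l (a b : G) : gmul a b = gmul b a -> gmul (ginv a) b = gmul b (ginv a).
Proof.
  intros H. apply (gmul_cancel_l a).
  rewrite gmulA, gmulVr, gmul1l, gmulA, H, <- gmulA, gmulVr, gmul1r. reflexivity.
Qed.

Lemma zpow_comm (c : G) m n :
  gmul (zpow G c m) (zpow G c n) = gmul (zpow G c n) (zpow G c m).
Proof.
  assert (Hpow : forall p q, gmul (npow G c p) (npow G c q) = gmul (npow G c q) (npow G c p)).
  { intros p q. now rewrite <- !npow_add, Nat.add_comm. }
  destruct m, n; simpl; rewrite ?gmul1l, ?gmul1r; auto.
  - symmetry. apply commute_inv_l, Hpow.
  - apply commute_inv_l, Hpow.
  - apply commute_inv_l. symmetry. apply commute_inv_l, Hpow.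
Qed.

Lemma finite_index_npow_mem (H : G -> Prop) (g : G) :
  subgroup G H -> finite_index G H -> exists d, (1 <= d)%nat /\ H (npow G g d).
Proof.
  intros [_ [HM HI]] [T HT].
  set (coset n := constructive_indefinite_description _ (HT (npow G g n))).
  destruct (pigeonhole_nat T (fun n => proj1_sig (coset n))) as [i [j [Hij E]]].
  { intros n. destruct (proj2_sig (coset n)) as [h [Ht _]]. exact Ht. }
  destruct (proj2_sig (coset i)) as [hi [_ [Hhi Ei]]].
  destruct (proj2_sig (coset j)) as [hj [_ [Hhj Ej]]].
  simpl in E. rewrite <- E in Ej.
  exists (j - i)%nat. split; [lia|].
  assert (Hd : gmul (npow G g i) (npow G g (j - i)) = npow G g j).
  { rewrite <- npow_add. f_equal. lia. }
  rewrite Ei, Ej, <- gmulA in Hd. apply gmul_cancel_l in Hd.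
  replace (npow G g (j - i)) with (gmul (ginv hi) hj).
  - apply HM; auto.
  - rewrite <- Hd, gmulA, gmulVl, gmul1l. reflexivity.
Qed.

Lemma non_elementary_of_noncommuting_powers (u v : G) :
  (forall i j, (1 <= i)%nat -> (1 <= j)%nat ->
     gmul (npow G u i) (npow G v j) <> gmul (npow G v j) (npow G u i)) ->
  non_elementary G.
Proof.
  intros Hnc [H [HH [Hfin [c [_ Hcyc]]]]].
  destruct (finite_index_npow_mem H u HH Hfin) as [i [Hi Hui]].
  destruct (finite_index_npow_mem H v HH Hfin) as [j [Hj Hvj]].
  destruct (Hcyc _ Hui) as [m Em]. destruct (Hcyc _ Hvj) as [n En].
  apply (Hnc i j Hi Hj). rewrite Em, En. apply zpow_comm.
Qed.

Lemma reps_conj (gens : list G) (s g : G) n :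
  In s gens -> In (ginv s) gens -> reps G gens n g ->
  reps G gens (S (S n)) (gmul (ginv s) (gmul g s)).
Proof.
  intros Hs Hs' [l [Hl [Hin Hg]]].
  exists (ginv s :: l ++ [s]). split; [|split].
  - simpl. rewrite length_app, Hl. simpl. lia.
  - constructor; [exact Hs'|]. apply Forall_app. auto.
  - simpl. rewrite fold_right_gmul_app, Hg. simpl. now rewrite gmul1r.
Qed.

Lemma gromov_based (gens : list G) (x z w : G) :
  gromov G gens x z w =
  (wlR G gens (ginv (gmul (ginv w) x)) + wlR G gens (ginv (gmul (ginv w) z))
   - wlR G gens (gmul (ginv (gmul (ginv w) x)) (gmul (ginv w) z))) / 2.
Proof.
  assert (Hxw : forall y, ginv (gmul (ginv w) y) = gmul (ginv y) w)
    by (intros y; now rewrite ginv_mul, ginvK).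
  unfold gromov, wdist. rewrite !Hxw, <- gmulA, (gmulA G w), gmulVr, gmul1l.
  reflexivity.
Qed.

End GroupFacts.

Section WordLength.
Variables (G : Grp) (gens : list G) (len : G -> nat).
Hypothesis len_one : len gone = 0%nat.
Hypothesis len_step : forall s g, In s gens -> (len (gmul s g) <= S (len g))%nat.
Hypothesis reps_len : forall g, reps G gens (len g) g.

Lemma len_le_reps n g : reps G gens n g -> (len g <= n)%nat.
Proof.
  intros [l [<- [Hl <-]]]. induction Hl as [|s l Hs _ IH]; simpl.
  - now rewrite len_one.
  - specialize (len_step s (fold_right gmul gone l) Hs). lia.
Qed.

Lemma wl_eq_len g : wl G gens g = len g.
Proof.
  unfold wl.
  destruct (epsilon_spec (inhabits 0%nat)
     (fun n => reps G gens n g /\ forall m, reps G gens m g -> (n <= m)%nat)) as [Hn Hmin].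
  - exists (len g). split; [apply reps_len | intros m; apply len_le_reps].
  - apply len_le_reps in Hn. specialize (Hmin _ (reps_len g)). lia.
Qed.

End WordLength.

Lemma hyperbolic_of_ultrametric_approx (G : Grp) (gens : list G) (f : G -> G -> G -> nat) c :
  0 <= c ->
  (forall w x y z, (Nat.min (f w x y) (f w y z) <= f w x z)%nat) ->
  (forall w x z, INR (f w x z) - c <= gromov G gens x z w <= INR (f w x z) + c) ->
  hyperbolic G gens.
Proof.
  intros Hc Hultra Happrox. exists (2 * c). split; [lra|]. intros x y z w.
  pose proof (Happrox w x z). pose proof (Happrox w x y). pose proof (Happrox w y z).
  specialize (Hultra w x y z).
  destruct (Nat.min_spec (f w x y) (f w y z)) as [[_ Hm] | [_ Hm]];
    rewrite Hm in Hultra; apply le_INR in Hultra; unfold Rmin; destruct Rle_dec; lra.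
Qed.

Section DirectProduct.
Variables G H : Grp.

Definition prod_mul (u v : G * H) : G * H := (gmul (fst u) (fst v), gmul (snd u) (snd v)).
Definition prod_inv (u : G * H) : G * H := (ginv (fst u), ginv (snd u)).

Lemma prod_mulA u v w : prod_mul u (prod_mul v w) = prod_mul (prod_mul u v) w.
Proof. cbv [prod_mul fst snd]. now rewrite !gmulA. Qed.
Lemma prod_mul1l u : prod_mul (gone, gone) u = u.
Proof. destruct u; cbv [prod_mul fst snd]. now rewrite !gmul1l. Qed.
Lemma prod_mul1r u : prod_mul u (gone, gone) = u.
Proof. destruct u; cbv [prod_mul fst snd]. now rewrite !gmul1r. Qed.
Lemma prod_mulVl u : prod_mul (prod_inv u) u = (gone, gone).
Proof. cbv [prod_mul prod_inv fst snd]. now rewrite !gmulVl. Qed.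
Lemma prod_mulVr u : prod_mul u (prod_inv u) = (gone, gone).
Proof. cbv [prod_mul prod_inv fst snd]. now rewrite !gmulVr. Qed.

Definition prod_grp : Grp :=
  {| car := G * H; gmul := prod_mul; gone := (gone, gone); ginv := prod_inv;
     gmulA := prod_mulA; gmul1l := prod_mul1l; gmul1r := prod_mul1r;
     gmulVl := prod_mulVl; gmulVr := prod_mulVr |}.

Lemma prod_gmulE (u v : prod_grp) : gmul u v = (gmul (fst u) (fst v), gmul (snd u) (snd v)).
Proof. reflexivity. Qed.

Lemma fold_right_prod_inl {X : Type} (f : X -> G) (l : list X) :
  fold_right (@gmul prod_grp) gone (map (fun x => (f x, gone)) l) =
  (fold_right gmul gone (map f l), gone).
Proof.
  induction l as [|x l IH]; [reflexivity|]. cbn [fold_right map].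
  rewrite IH, prod_gmulE; cbn [fst snd].
  now rewrite gmul1l.
Qed.

Lemma fold_right_prod_inr (l : list H) :
  fold_right (@gmul prod_grp) gone (map (fun h => (gone, h)) l) = (gone, fold_right gmul gone l).
Proof.
  induction l as [|h l IH]; [reflexivity|]. cbn [fold_right map].
  rewrite IH, prod_gmulE; cbn [fst snd].
  now rewrite gmul1l.
Qed.

Lemma prod_ginvE (u : prod_grp) : ginv u = (ginv (fst u), ginv (snd u)).
Proof. reflexivity. Qed.

Lemma npow_prod_inl (g : G) n : npow prod_grp (g, gone) n = (npow G g n, gone).
Proof.
  induction n as [|n IH]; [reflexivity|]. cbn [npow]. rewrite IH, prod_gmulE; cbn [fst snd].
  now rewrite gmul1l.
Qed.

End DirectProduct.

Section UniversalCoxeter.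
Context {A : Type} (A_eq_dec : forall x y : A, {x = y} + {x <> y}).

Fixpoint reduced (l : list A) : bool :=
  match l with
  | x :: (y :: _) as t => if A_eq_dec x y then false else reduced t
  | _ => true
  end.

Definition wcons (x : A) (l : list A) : list A :=
  match l with
  | y :: t => if A_eq_dec x y then t else x :: l
  | [] => [x]
  end.

Definition wmul (l m : list A) : list A := fold_right wcons m l.

Lemma reduced_cons x l :
  reduced (x :: l) = true <-> hd_error l <> Some x /\ reduced l = true.
Proof.
  destruct l as [|y t]; simpl.
  - split; [split; [discriminate | reflexivity] | reflexivity].
  - destruct (A_eq_dec x y) as [<-|Hxy].
    + split; [discriminate | now intros [? _]].
    + split; [intros Ht; split; [congruence | exact Ht] | now intros [_ Ht]].
Qed.

Lemma reduced_tail x l : reduced (x :: l) = true -> reduced l = true.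
Proof. now intros [_ Hl]%reduced_cons. Qed.

Lemma wcons_reduced x l : reduced (x :: l) = true -> wcons x l = x :: l.
Proof.
  intros [Hhd _]%reduced_cons. destruct l as [|y t]; simpl; [reflexivity|].
  destruct (A_eq_dec x y) as [<-|]; [easy | reflexivity].
Qed.

Lemma reduced_wcons x l : reduced l = true -> reduced (wcons x l) = true.
Proof.
  intros Hl. destruct l as [|y t]; [reflexivity|]. simpl.
  destruct (A_eq_dec x y) as [->|Hxy].
  - exact (reduced_tail _ _ Hl).
  - apply reduced_cons. split; [simpl; congruence | exact Hl].
Qed.

Lemma reduced_wmul l m : reduced m = true -> reduced (wmul l m) = true.
Proof. intros Hm. induction l; simpl; auto using reduced_wcons. Qed.

Lemma wconsK x m : reduced m = true -> wcons x (wcons x m) = m.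
Proof.
  intros Hm. destruct m as [|y t]; simpl.
  - now destruct (A_eq_dec x x).
  - destruct (A_eq_dec x y) as [<-|Hxy].
    + exact (wcons_reduced _ _ Hm).
    + simpl. now destruct (A_eq_dec x x).
Qed.

Lemma wmul_wcons x l m : reduced m = true -> wmul (wcons x l) m = wcons x (wmul l m).
Proof.
  intros Hm. destruct l as [|y t]; [reflexivity|]. simpl.
  destruct (A_eq_dec x y) as [<-|]; [|reflexivity].
  now rewrite wconsK by (now apply reduced_wmul).
Qed.

Lemma wmulA l1 l2 l3 : reduced l3 = true -> wmul (wmul l1 l2) l3 = wmul l1 (wmul l2 l3).
Proof.
  intros H3. induction l1 as [|x l1 IH]; [reflexivity|]. simpl.
  now rewrite wmul_wcons, IH.
Qed.

Lemma wmul_app l1 l2 m : wmul (l1 ++ l2) m = wmul l1 (wmul l2 m).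
Proof. apply fold_right_app. Qed.

Lemma wmul_reduced_app l m : reduced (l ++ m) = true -> wmul l m = l ++ m.
Proof.
  induction l as [|x l IH]; intros H; [reflexivity|]. simpl.
  rewrite IH by exact (reduced_tail _ _ H). exact (wcons_reduced _ _ H).
Qed.

Lemma wmul_nil_r l : reduced l = true -> wmul l [] = l.
Proof. intros H. rewrite wmul_reduced_app; rewrite ?app_nil_r; auto. Qed.

Lemma wmul_rev_r l m : reduced m = true -> wmul l (wmul (rev l) m) = m.
Proof.
  revert m; induction l as [|x l IH]; intros m Hm; [reflexivity|].
  simpl. rewrite wmul_app. simpl.
  rewrite IH by (now apply reduced_wcons). now apply wconsK.
Qed.

Lemma wmul_rev_l l m : reduced m = true -> wmul (rev l) (wmul l m) = m.
Proof.
  revert m; induction l as [|x l IH]; intros m Hm; [reflexivity|].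
  simpl. rewrite wmul_app. simpl.
  rewrite wconsK by (now apply reduced_wmul). now apply IH.
Qed.

Lemma length_wcons x l : (length (wcons x l) <= S (length l))%nat.
Proof. destruct l as [|y t]; simpl; [lia|]. destruct (A_eq_dec x y); simpl; lia. Qed.

Fixpoint lcp (l m : list A) : nat :=
  match l, m with
  | x :: l', y :: m' => if A_eq_dec x y then S (lcp l' m') else 0
  | _, _ => 0
  end.

Lemma lcp_min l m n : (Nat.min (lcp l m) (lcp m n) <= lcp l n)%nat.
Proof.
  revert m n; induction l as [|x l IH]; intros m n; simpl; [lia|].
  destruct m as [|y m]; [simpl; lia|]. destruct n as [|z n]; simpl.
  - destruct (A_eq_dec x y); lia.
  - destruct (A_eq_dec x y) as [<-|]; [|lia].
    destruct (A_eq_dec x z); [|lia]. specialize (IH m n). lia.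
Qed.

Lemma lcp_reduced_cons x l m : reduced (x :: l) = true -> lcp l (x :: m) = 0%nat.
Proof.
  intros [Hhd _]%reduced_cons. destruct l as [|y l]; [reflexivity|]. simpl.
  destruct (A_eq_dec y x) as [->|]; [easy | reflexivity].
Qed.

(* The Cayley graph is a tree: the geodesic from [l] to [m] goes through their
   longest common prefix. *)
Lemma length_wmul_rev l m : reduced l = true -> reduced m = true ->
  (length (wmul (rev l) m) + 2 * lcp l m = length l + length m)%nat.
Proof.
  revert m; induction l as [|x l IH]; intros m Hl Hm; [simpl; lia|].
  simpl rev. rewrite wmul_app. simpl.
  pose proof (reduced_tail _ _ Hl) as Hl'.
  destruct m as [|y m]; simpl.
  - specialize (IH [x] Hl' eq_refl). rewrite lcp_reduced_cons in IH by exact Hl.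
    simpl in *. lia.
  - destruct (A_eq_dec x y) as [<-|Hxy].
    + specialize (IH m Hl' (reduced_tail _ _ Hm)). lia.
    + assert (Hxm : reduced (x :: y :: m) = true)
        by (apply reduced_cons; split; [simpl; congruence | exact Hm]).
      specialize (IH _ Hl' Hxm). rewrite lcp_reduced_cons in IH by exact Hl.
      simpl in *. lia.
Qed.

Fixpoint alt (a b : A) (n : nat) : list A :=
  match n with O => [] | S k => a :: b :: alt a b k end.

Lemma length_alt a b n : length (alt a b n) = (2 * n)%nat.
Proof. induction n; simpl; lia. Qed.

Lemma reduced_alt_app a b n l : a <> b -> hd_error l <> Some b -> reduced l = true ->
  reduced (alt a b n ++ l) = true.
Proof.
  intros Hab Hhd Hl. induction n as [|n IH]; [exact Hl|]. cbn [alt app].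
  apply reduced_cons. split; [simpl; congruence|].
  apply reduced_cons. split; [|exact IH].
  destruct n; simpl; [exact Hhd | congruence].
Qed.

Lemma reduced_alt a b n : a <> b -> reduced (alt a b n) = true.
Proof. intros Hab. rewrite <- (app_nil_r (alt a b n)). now apply reduced_alt_app. Qed.

Definition coxeter_word := {l : list A | reduced l = true}.

Lemma coxeter_word_eq (u v : coxeter_word) : proj1_sig u = proj1_sig v -> u = v.
Proof.
  destruct u as [u Hu], v as [v Hv]; simpl; intros <-.
  f_equal. apply UIP_dec, bool_dec.
Qed.

Definition cmul (u v : coxeter_word) : coxeter_word :=
  exist _ (wmul (proj1_sig u) (proj1_sig v)) (reduced_wmul _ _ (proj2_sig v)).
Definition cone : coxeter_word := exist _ [] eq_refl.
(* Letters are involutions, so the inverse of a word is its reversal. *)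
Definition cinv (u : coxeter_word) : coxeter_word :=
  exist _ (wmul (rev (proj1_sig u)) []) (reduced_wmul _ [] eq_refl).

Lemma cmulA u v w : cmul u (cmul v w) = cmul (cmul u v) w.
Proof. apply coxeter_word_eq; simpl. symmetry. apply wmulA, proj2_sig. Qed.
Lemma cmul1l u : cmul cone u = u.
Proof. now apply coxeter_word_eq. Qed.
Lemma cmul1r u : cmul u cone = u.
Proof. apply coxeter_word_eq, wmul_nil_r, proj2_sig. Qed.
Lemma cmulVl u : cmul (cinv u) u = cone.
Proof.
  destruct u as [u Hu]. apply coxeter_word_eq; simpl.
  rewrite wmulA by exact Hu. transitivity (wmul (rev u) (wmul u [])).
  - now rewrite wmul_nil_r.
  - now apply wmul_rev_l.
Qed.
Lemma cmulVr u : cmul u (cinv u) = cone.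
Proof. apply coxeter_word_eq. now apply wmul_rev_r. Qed.

Definition coxeter_grp : Grp :=
  {| car := coxeter_word; gmul := cmul; gone := cone; ginv := cinv;
     gmulA := cmulA; gmul1l := cmul1l; gmul1r := cmul1r;
     gmulVl := cmulVl; gmulVr := cmulVr |}.

Lemma length_cinv u : length (proj1_sig (cinv u)) = length (proj1_sig u).
Proof.
  destruct u as [l Hl]. pose proof (length_wmul_rev l [] Hl eq_refl) as Hlen.
  destruct l; simpl in *; lia.
Qed.

Lemma cinv_mul_word u v : proj1_sig (cmul (cinv u) v) = wmul (rev (proj1_sig u)) (proj1_sig v).
Proof. apply wmulA, proj2_sig. Qed.

Definition cletter (x : A) : coxeter_grp := exist _ [x] eq_refl.

Lemma fold_right_cletter l :
  proj1_sig (fold_right (@gmul coxeter_grp) gone (map cletter l)) = wmul l [].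
Proof.
  induction l as [|x l IH]; [reflexivity|]. exact (f_equal (wcons x) IH).
Qed.

Lemma proj1_npow_cletter_mul a b n : a <> b ->
  proj1_sig (npow coxeter_grp (cmul (cletter a) (cletter b)) n) = alt a b n.
Proof.
  intros Hab. induction n as [|n IH]; [reflexivity|]. simpl. rewrite IH.
  destruct (A_eq_dec b b); [|easy]. destruct (A_eq_dec a b); [easy|].
  apply (wmul_reduced_app [a; b]), (reduced_alt a b (S n) Hab).
Qed.

Lemma npow_cletter_mul_noncommuting a b c i j : a <> b -> a <> c -> b <> c ->
  (1 <= i)%nat -> (1 <= j)%nat ->
  let u := npow coxeter_grp (cmul (cletter a) (cletter b)) i in
  let v := npow coxeter_grp (cmul (cletter a) (cletter c)) j in
  cmul u v <> cmul v u.
Proof.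
  intros Hab Hac Hbc Hi Hj u v E. apply (f_equal (@proj1_sig _ _)) in E. simpl in E.
  unfold u, v in E. rewrite !proj1_npow_cletter_mul in E by assumption.
  rewrite !wmul_reduced_app in E.
  1: destruct i, j; [lia.. | simpl in E; congruence].
  all: apply reduced_alt_app; auto using reduced_alt; destruct i, j; simpl; congruence.
Qed.

End UniversalCoxeter.

Inductive z3 := r0 | r1 | r2.

Definition z3_succ (k : z3) : z3 := match k with r0 => r1 | r1 => r2 | r2 => r0 end.
Definition z3_add (k m : z3) : z3 :=
  match k with r0 => m | r1 => z3_succ m | r2 => z3_succ (z3_succ m) end.
Definition z3_opp (k : z3) : z3 := match k with r0 => r0 | r1 => r2 | r2 => r1 end.

(* The dihedral group of order 6: (k, s) stands for rho^k tau^s, where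
   tau rho tau = rho^-1. *)
Definition d3_mul (u v : z3 * bool) : z3 * bool :=
  (z3_add (fst u) (if snd u then z3_opp (fst v) else fst v), xorb (snd u) (snd v)).
Definition d3_inv (u : z3 * bool) : z3 * bool :=
  (if snd u then fst u else z3_opp (fst u), snd u).

Lemma d3_mulA u v w : d3_mul u (d3_mul v w) = d3_mul (d3_mul u v) w.
Proof. destruct u as [[] []], v as [[] []], w as [[] []]; reflexivity. Qed.
Lemma d3_mul1l u : d3_mul (r0, false) u = u.
Proof. destruct u as [[] []]; reflexivity. Qed.
Lemma d3_mul1r u : d3_mul u (r0, false) = u.
Proof. destruct u as [[] []]; reflexivity. Qed.
Lemma d3_mulVl u : d3_mul (d3_inv u) u = (r0, false).
Proof. destruct u as [[] []]; reflexivity. Qed.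
Lemma d3_mulVr u : d3_mul u (d3_inv u) = (r0, false).
Proof. destruct u as [[] []]; reflexivity. Qed.

Definition D3 : Grp :=
  {| car := z3 * bool; gmul := d3_mul; gone := (r0, false); ginv := d3_inv;
     gmulA := d3_mulA; gmul1l := d3_mul1l; gmul1r := d3_mul1r;
     gmulVl := d3_mulVl; gmulVr := d3_mulVr |}.

Definition d3_x : D3 := (r0, true).
Definition d3_y : D3 := (r1, true).

Definition d3_word (u : D3) : list D3 :=
  match u with
  | (r0, false) => []
  | (r0, true) => [d3_x]
  | (r1, true) => [d3_y]
  | (r1, false) => [d3_y; d3_x]
  | (r2, false) => [d3_x; d3_y]
  | (r2, true) => [d3_x; d3_y; d3_x]
  end.

Definition d3_len (u : D3) : nat := length (d3_word u).

Lemma fold_right_d3_word u : fold_right gmul gone (d3_word u) = u.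
Proof. destruct u as [[] []]; reflexivity. Qed.

Lemma d3_len_step s u : In s [d3_x; d3_y] -> (d3_len (gmul s u) <= S (d3_len u))%nat.
Proof.
  intros [<- | [<- | []]]; destruct u as [[] []]; cbv; lia.
Qed.

Lemma d3_len_le u : (d3_len u <= 3)%nat.
Proof. destruct u as [[] []]; cbv; lia. Qed.

Inductive letter := La | Lb | Lc.

Definition letter_eq_dec (x y : letter) : {x = y} + {x <> y}.
Proof. decide equality. Defined.

Definition W3 : Grp := coxeter_grp letter_eq_dec.
Notation W3xD3 := (prod_grp W3 D3).

Definition gen_letter (x : letter) : W3xD3 := (cletter letter_eq_dec x, gone).
Definition gen_d3 (u : D3) : W3xD3 := (gone, u).
Definition gens : list W3xD3 :=
  [gen_letter La; gen_letter Lb; gen_letter Lc; gen_d3 d3_x; gen_d3 d3_y].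

Definition word (g : W3xD3) : list letter := proj1_sig (fst g).
Definition glen (g : W3xD3) : nat := (length (word g) + d3_len (snd g))%nat.

Lemma glen_step s g : In s gens -> (glen (gmul s g) <= S (glen g))%nat.
Proof.
  unfold glen, word. rewrite prod_gmulE. cbn [fst snd].
  intros [<- | [<- | [<- | [<- | [<- | []]]]]]; cbn [gen_letter gen_d3 fst snd]; rewrite gmul1l.
  1-3: apply (Nat.add_le_mono_r _ (S _)), length_wcons.
  all: rewrite <- Nat.add_succ_r; apply Nat.add_le_mono_l, d3_len_step; simpl; auto.
Qed.

Lemma reps_glen g : reps W3xD3 gens (glen g) g.
Proof.
  destruct g as [[h Hh] u].
  exists (map gen_letter h ++ map gen_d3 (d3_word u)). split; [|split].
  - now rewrite length_app, !length_map.
  - apply Forall_app. split; apply Forall_forall; intros s Hs;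
      apply in_map_iff in Hs; destruct Hs as [x [<- Hx]].
    + destruct x; simpl; tauto.
    + destruct u as [[] []]; simpl in Hx; intuition (subst; simpl; tauto).
  - change (map gen_letter h) with (map (fun x => (cletter letter_eq_dec x, gone : D3)) h).
    change (map gen_d3 (d3_word u)) with (map (fun d : D3 => (gone : W3, d)) (d3_word u)).
    rewrite fold_right_gmul_app, fold_right_prod_inl, fold_right_prod_inr.
    rewrite fold_right_d3_word, prod_gmulE. cbn [fst snd]. rewrite gmul1l, gmul1r. f_equal.
    apply coxeter_word_eq. rewrite fold_right_cletter. now apply wmul_nil_r.
Qed.

Lemma wl_glen g : wl W3xD3 gens g = glen g.
Proof. apply wl_eq_len; [reflexivity | exact glen_step | exact reps_glen]. Qed.

Lemma gens_inv s : In s gens -> ginv s = s.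
Proof.
  intros [<- | [<- | [<- | [<- | [<- | []]]]]];
    apply injective_projections; try apply coxeter_word_eq; reflexivity.
Qed.

Lemma gens_generate : gen_set W3xD3 gens.
Proof.
  set (key g := (word g, snd g)).
  split; [|split; [|split]].
  - apply (NoDup_map_inv key). repeat constructor; simpl; intuition discriminate.
  - intros H. apply (in_map key) in H. simpl in H. intuition discriminate.
  - intros s Hs. now rewrite gens_inv.
  - intros g. destruct (reps_glen g) as [l [_ Hl]]. now exists l.
Qed.

Definition based_lcp (w x z : W3xD3) : nat :=
  lcp letter_eq_dec (word (gmul (ginv w) x)) (word (gmul (ginv w) z)).

Lemma gromov_near_based_lcp w x z :
  INR (based_lcp w x z) - 3 <= gromov W3xD3 gens x z w <= INR (based_lcp w x z) + 3.
Proof.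
  rewrite gromov_based. unfold based_lcp, wlR. rewrite !wl_glen.
  generalize (gmul (ginv w) x) (gmul (ginv w) z). intros [X kx] [Z kz].
  unfold glen, word. rewrite !prod_ginvE, prod_gmulE. cbn [fst snd].
  change (@gmul W3) with (cmul letter_eq_dec).
  change (@ginv W3) with (cinv letter_eq_dec).
  rewrite cinv_mul_word, !length_cinv.
  pose proof (length_wmul_rev _ _ _ (proj2_sig X) (proj2_sig Z)) as Htree.
  apply (f_equal INR) in Htree. rewrite !plus_INR, mult_INR in Htree. simpl INR in Htree.
  assert (Hd : forall u : D3, 0 <= INR (d3_len u) <= 3).
  { intros u. split; [apply pos_INR|].
    replace 3 with (INR 3) by (simpl; lra). apply le_INR, d3_len_le. }
  pose proof (Hd (ginv kx)). pose proof (Hd (ginv kz)). pose proof (Hd (gmul (ginv kx) kz)).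
  rewrite !plus_INR. simpl in *. lra.
Qed.

Lemma W3xD3_hyperbolic : hyperbolic W3xD3 gens.
Proof.
  apply (hyperbolic_of_ultrametric_approx _ _ based_lcp 3); [lra | | exact gromov_near_based_lcp].
  intros w x y z. apply lcp_min.
Qed.

Lemma W3xD3_non_elementary : non_elementary W3xD3.
Proof.
  set (c x y := cmul letter_eq_dec (cletter letter_eq_dec x) (cletter letter_eq_dec y)).
  apply (non_elementary_of_noncommuting_powers W3xD3 (c La Lb, gone : D3) (c La Lc, gone : D3)).
  intros i j Hi Hj E. rewrite !npow_prod_inl, !prod_gmulE in E. apply (f_equal fst) in E.
  cbn [fst] in E.
  exact (npow_cletter_mul_noncommuting _ La Lb Lc i j ltac:(easy) ltac:(easy) ltac:(easy) Hi Hj E).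
Qed.

Definition wseq_word (n : nat) : list letter := alt La Lb (S n) ++ [La].

Lemma wseq_word_reduced n : reduced letter_eq_dec (wseq_word n) = true.
Proof. apply reduced_alt_app; easy. Qed.

Definition wseq (n : nat) : W3xD3 := (exist _ (wseq_word n) (wseq_word_reduced n), (r2, true)).

Lemma glen_wseq n : glen (wseq n) = (2 * n + 6)%nat.
Proof.
  unfold glen, word, wseq, wseq_word. cbn [proj1_sig fst snd].
  rewrite length_app, length_alt. cbn. lia.
Qed.

Lemma glen_conj_a n :
  glen (gmul (ginv (gen_letter La)) (gmul (wseq n) (gen_letter La))) = (2 * n + 4)%nat.
Proof.
  unfold glen, word. rewrite !prod_gmulE, prod_ginvE. cbn [fst snd].
  change (@gmul W3) with (cmul letter_eq_dec).
  change (@ginv W3) with (cinv letter_eq_dec).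
  rewrite cinv_mul_word. cbn [proj1_sig wseq cmul gen_letter fst snd cletter]. unfold wseq_word.
  rewrite wmul_app. change (wmul letter_eq_dec [La] [La]) with (@nil letter).
  rewrite wmul_nil_r by (apply reduced_alt; easy).
  cbn. rewrite length_alt. lia.
Qed.

Lemma glen_conj_d3 n s : In s [d3_x; d3_y] ->
  glen (gmul (ginv (gen_d3 s)) (gmul (wseq n) (gen_d3 s))) = (2 * n + 4)%nat.
Proof.
  intros Hs. unfold glen, word. rewrite !prod_gmulE, prod_ginvE. cbn [fst snd].
  change (@gmul W3) with (cmul letter_eq_dec).
  change (@ginv W3) with (cinv letter_eq_dec).
  rewrite cinv_mul_word. cbn [proj1_sig wseq cmul gen_d3 fst snd].
  change (proj1_sig (@gone W3)) with (@nil letter).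
  rewrite wmul_nil_r by apply wseq_word_reduced. cbn [rev wmul fold_right]. unfold wseq_word.
  rewrite length_app, length_alt.
  destruct Hs as [<- | [<- | []]]; cbn; lia.
Qed.

Lemma glen_conj_le s g : In s gens ->
  (glen (gmul (ginv s) (gmul g s)) <= S (S (glen g)))%nat.
Proof.
  intros Hs. apply (len_le_reps _ gens glen); [reflexivity | exact glen_step |].
  apply reps_conj; [exact Hs | now rewrite gens_inv | apply reps_glen].
Qed.

Lemma kappa_wseq_pos n : kappa W3xD3 gens (wseq n) > 0.
Proof.
  unfold kappa, Av, wlR. cbn [gens map fold_right length]. rewrite !wl_glen.
  rewrite glen_wseq, glen_conj_a, !glen_conj_d3 by (simpl; auto).
  pose proof (glen_conj_le (gen_letter Lb) (wseq n) ltac:(simpl; auto)) as Hb.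
  pose proof (glen_conj_le (gen_letter Lc) (wseq n) ltac:(simpl; auto)) as Hc.
  rewrite glen_wseq in Hb, Hc. apply le_INR in Hb, Hc.
  rewrite !S_INR, !plus_INR, !mult_INR in *. simpl INR in *.
  pose proof (pos_INR n). apply Rdiv_lt_0_compat; lra.
Qed.

Theorem mainTheorem9 :
  exists (G : Grp) (S : list G) (w : nat -> G),
    gen_set G S /\ hyperbolic G S /\ non_elementary G /\
    (forall i j : nat, w i = w j -> i = j) /\
    (forall i : nat, w i <> gone /\ kappa G S (w i) > 0).
Proof.
  exists W3xD3, gens, wseq.
  split; [exact gens_generate|]. split; [exact W3xD3_hyperbolic|].
  split; [exact W3xD3_non_elementary|]. split.
  - intros i j E. apply (f_equal glen) in E. rewrite !glen_wseq in E. lia.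
  - intros i. split; [intros E; apply (f_equal snd) in E; discriminate | apply kappa_wseq_pos].
Qed.
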